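(* Let $q$ be odd, $G=\Omega_{2m+1}(q)$ with natural module $V$, and let $g\in G$ be regular semisimple. Then $g$ centralizes a nondegenerate $1$-space and $\dim C_V(g)=1$. Moreover, either $g$ stabilizes no other nondegenerate $1$-space, or $g$ acts as $-1$ on a nondegenerate $2$-space and stabilizes no other nondegenerate $1$-space.
   Context: $\Omega_{2m+1}(q)$ is the derived subgroup (of index $2$) of $\mathrm{SO}_{2m+1}(q)$ acting on a $(2m+1)$-dimensional $\mathbb F_q$-space with nondegenerate quadratic form. An element is regular semisimple if it is semisimple and its centralizer in the ambient algebraic group has connected component a maximal torus; equivalently it commutes with no nontrivial unipotent element. *)

From HB Require Import structures.
From mathcomp Require Import all_boot all_order all_algebra all_fingroup all_field.
Set Implicit Arguments. Unset Strict Implicit. Unset Printing Implicit Defensive.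
Import GRing.Theory.
Local Open Scope ring_scope.

(* Conventions: V = 'rV[F]_n (row vectors), a matrix g acts by v |-> v *m g.
   Since q is odd, a nondegenerate quadratic form on V is Q(v) = v B v^T with
   B symmetric and invertible (polar form 2B); we work with B. *)

Definition isometry (R : comNzRingType) n (B g : 'M[R]_n) : Prop :=
  g *m B *m g^T = B.

Definition qform (R : comNzRingType) n (B : 'M[R]_n) (v : 'rV[R]_n) : R :=
  (v *m B *m v^T) 0 0.

Definition SO_set (F : finFieldType) n (B : 'M[F]_n.+1) : {set {'GL_n.+1[F]}} :=
  [set g : {'GL_n.+1[F]} | (GLval g *m B *m (GLval g)^T == B) && (\det (GLval g) == 1)].

Definition Omega_set (F : finFieldType) n (B : 'M[F]_n.+1) : {set {'GL_n.+1[F]}} :=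
  ([~: SO_set B, SO_set B])%g.

Definition closureF (F : finFieldType) : countClosedFieldType :=
  projT1 (countable_algebraic_closure F).
Definition toClosure (F : finFieldType) : {rmorphism F -> closureF F} :=
  proj1_sig (projT2 (countable_algebraic_closure F)).

Definition unipotent (K : fieldType) n (u : 'M[K]_n) : Prop :=
  exists k : nat, (u - 1%:M) ^+ k = 0.

(* g is regular semisimple in the algebraic group SO(B)(\bar F):
   semisimple (diagonalizable over \bar F) and commuting with no nontrivial
   unipotent element of SO(B)(\bar F). *)
Definition regular_semisimple (F : finFieldType) n (B g : 'M[F]_n) : Prop :=
  let f := toClosure F in
  diagonalizable (map_mx f g) /\
  forall u : 'M[closureF F]_n,
    isometry (map_mx f B) u -> \det u = 1 -> unipotent u ->
    u *m map_mx f g = map_mx f g *m u -> u = 1%:M.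

Definition fixed_space (F : fieldType) n (g : 'M[F]_n) : 'M[F]_n := kermx (g - 1%:M).

Definition stab_nondeg_line (F : fieldType) n (B g : 'M[F]_n) (v : 'rV[F]_n) : Prop :=
  v != 0 /\ qform B v != 0 /\ (v *m g <= v)%MS.

From Pilot Require Import Defs.
From HB Require Import structures.
From mathcomp Require Import all_boot all_order all_algebra all_fingroup all_field.
From mathcomp Require Import cyclic ring zify.
Set Implicit Arguments.
Unset Strict Implicit.
Unset Printing Implicit Defensive.
Import GRing.Theory.
Local Open Scope ring_scope.

(* The proof is linear algebra on the eigenspaces E_eps = ker (X - eps),
   eps = +-1, of an isometry X of B:
   - det (X - eps) = (-eps)^n det X det (X - eps), so X has an eps-eigenvector
     as soon as (-eps)^n det X != 1 (eigenvector_of_det);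
   - if X is semisimple at eps, E_eps is nondegenerate, being complemented by
     the orthogonal space Im (X - eps) (eigenspace_nondeg);
   - twisting X by the reflections in an orthogonal basis of E_eps multiplies
     det X by -1 for each reflection but creates no eps-eigenvector outside
     the fixed vectors of the twist (eigen_of_twist);
     with n odd and det X = 1 this rules out dim E_1 = 0, 2 and dim E_{-1} = 1;
   - over an algebraically closed field, dim E_eps >= 3 yields an isotropic e
     and x orthogonal to e in E_eps, whose Siegel transformation is a
     nontrivial unipotent element of SO(B) commuting with X; regularity thus
     forces dim E_eps <= 2 (eigenspace_rank_le2).
   Hence dim E_1 = 1 and dim E_{-1} is 0 or 2 over the algebraic closure
   (regular_eigenspaces); these dimensions descend to F, and a stabilised
   nondegenerate line is an eigenline for +-1, which gives the theorem. *)

Section BilinearForm.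
Variables (R : fieldType) (n : nat) (B : 'M[R]_n).
Implicit Types (u v w x z e : 'rV[R]_n) (X : 'M[R]_n).

Definition bil u v : R := (u *m B *m v^T) 0 0.

Lemma bil_mx u v : u *m B *m v^T = (bil u v)%:M.
Proof. exact: mx11_scalar. Qed.

Lemma bilDl u u' v : bil (u + u') v = bil u v + bil u' v.
Proof. by rewrite /bil !mulmxDl mxE. Qed.
Lemma bilDr u v v' : bil u (v + v') = bil u v + bil u v'.
Proof. by rewrite /bil linearD /= mulmxDr mxE. Qed.
Lemma bilZl a u v : bil (a *: u) v = a * bil u v.
Proof. by rewrite /bil -!scalemxAl mxE. Qed.
Lemma bilZr a u v : bil u (a *: v) = a * bil u v.
Proof. by rewrite /bil linearZ /= -scalemxAr mxE. Qed.
Lemma bilNl u v : bil (- u) v = - bil u v.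
Proof. by rewrite -scaleN1r bilZl mulN1r. Qed.
Lemma bilNr u v : bil u (- v) = - bil u v.
Proof. by rewrite -scaleN1r bilZr mulN1r. Qed.
Lemma bilBl u u' v : bil (u - u') v = bil u v - bil u' v.
Proof. by rewrite bilDl bilNl. Qed.
Lemma bilBr u v v' : bil u (v - v') = bil u v - bil u v'.
Proof. by rewrite bilDr bilNr. Qed.
Lemma bil0l v : bil 0 v = 0.
Proof. by rewrite /bil !mul0mx mxE. Qed.

Lemma bil_ext X Y :
  (forall v w, (v *m X *m w^T) 0 0 = (v *m Y *m w^T) 0 0) -> X = Y.
Proof.
move=> eqXY; apply/matrixP => i j; have := eqXY (delta_mx 0 i) (delta_mx 0 j).
by rewrite trmx_delta -!rowE -!colE !mxE.
Qed.

Lemma bil_isometry X u v : Defs.isometry B X -> bil (u *m X) (v *m X) = bil u v.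
Proof.
by move=> isoX; rewrite /bil trmx_mul !mulmxA -(mulmxA _ X) -(mulmxA _ (X *m B)) isoX.
Qed.

Lemma isometry_bil X :
  (forall u v, bil (u *m X) (v *m X) = bil u v) -> Defs.isometry B X.
Proof.
move=> presX; apply: bil_ext => u v; have := presX u v.
by rewrite /bil trmx_mul !mulmxA.
Qed.

Lemma isometryM X Y : Defs.isometry B X -> Defs.isometry B Y -> Defs.isometry B (X *m Y).
Proof.
by move=> isoX isoY; apply: isometry_bil => u v; rewrite !mulmxA !bil_isometry.
Qed.

Lemma mulmx_row_ext X Y : (forall v, v *m X = v *m Y) -> X = Y.
Proof. by move=> eqXY; apply/row_matrixP => i; rewrite !rowE eqXY. Qed.

Lemma rank1_act v x e : v *m (B *m x^T *m e) = bil v x *: e.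
Proof. by rewrite !mulmxA bil_mx mul_scalar_mx. Qed.

Definition perp x : 'M[R]_n := kermx (B *m x^T).

Lemma perpP z x : reflect (bil z x = 0) (z <= perp x)%MS.
Proof.
apply: (iffP sub_kermxP) => [zx0 | bzx0]; first by rewrite /bil -mulmxA zx0 mxE.
by rewrite mulmxA bil_mx bzx0 raddf0.
Qed.

Lemma rank_cap_perp m (S : 'M[R]_(m, n)) x :
  (\rank S <= (\rank (S :&: perp x)).+1)%N.
Proof.
have := mxrank_sum_cap S (perp x); rewrite /perp mxrank_ker.
have := rank_leq_col (B *m x^T); have := rank_leq_col (S + kermx (B *m x^T))%MS.
lia.
Qed.

Lemma rank1_span m (S : 'M[R]_(m, n)) w :
  (w <= S)%MS -> w != 0 -> \rank S = 1%N -> (S <= w)%MS.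
Proof. by move=> wS w0 rS; rewrite -(geq_leqif (mxrank_leqif_sup wS)) rS rank_rV w0. Qed.

Lemma exists_vec_outside m1 m2 (S : 'M[R]_(m1, n)) (A : 'M[R]_(m2, n)) :
  (\rank A < \rank S)%N -> exists2 v : 'rV[R]_n, (v <= S)%MS & ~~ (v <= A)%MS.
Proof.
move=> ltAS; have /row_subPn [i notA] : ~~ (S <= A)%MS.
  by apply: contraL ltAS => /mxrankS; rewrite leqNgt.
by exists (row i S); first exact: row_sub.
Qed.

Definition nondeg_on m (S : 'M[R]_(m, n)) : Prop :=
  forall z, (z <= S)%MS -> (forall s, (s <= S)%MS -> bil z s = 0) -> z = 0.

Lemma gram_unit m (W : 'M[R]_(m, n)) :
  row_free W -> nondeg_on W -> W *m B *m W^T \in unitmx.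
Proof.
move=> freeW ndW; rewrite unitmxE unitfE; apply/negP => /det0P [c c0 cG].
have cW0 : c *m W = 0.
  apply: ndW => [|s /submxP [d ->]]; first exact: submxMl.
  have -> : bil (c *m W) (d *m W) = (c *m (W *m B *m W^T) *m d^T) 0 0.
    by rewrite /bil trmx_mul !mulmxA.
  by rewrite cG !mul0mx mxE.
by move/negP: c0; apply; rewrite -(mulmx_free_eq0 _ freeW) cW0.
Qed.

Section Nondegenerate.
Hypothesis unitB : B \in unitmx.

Lemma exists_nonorth e : e != 0 -> exists v, bil v e != 0.
Proof.
move=> e0; have : B *m e^T != 0.
  apply: contraNneq e0 => Be0.
  by rewrite -[e]trmxK -(mulKmx unitB e^T) Be0 mulmx0 trmx0.
case/matrix0Pn => i [j Bei]; rewrite (ord1 j) in Bei.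
by exists (delta_mx 0 i); rewrite /bil -mulmxA -rowE mxE.
Qed.

(* For an isometry X and eps = +-1, det (X - eps) = (-eps)^n det X det (X - eps),
   from X - eps = X B (-eps (X - eps)^T) B^-1. *)
Lemma det_isometry_shift X eps : Defs.isometry B X -> eps ^+ 2 = 1 ->
  \det (X - eps%:M) = (- eps) ^+ n * \det X * \det (X - eps%:M).
Proof.
move=> isoX eps2.
have shift : X - eps%:M = X *m B *m ((- eps) *: (X - eps%:M)^T) *m invmx B.
  have -> : (- eps) *: (X - eps%:M)^T = 1%:M - eps *: X^T.
    rewrite linearB /= tr_scalar_mx scalerBr scale_scalar_mx mulNr -expr2 eps2.
    by rewrite scaleNr raddfN opprK addrC.
  rewrite mulmxBr mulmx1 -scalemxAr isoX mulmxBl -scalemxAl mulmxK // mulmxV //.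
  by rewrite scalemx1.
rewrite {1}shift !det_mulmx detZ det_tr det_inv.
have dB : \det B != 0 by rewrite -unitfE -unitmxE.
by field.
Qed.

Lemma eigenvector_of_det X eps : Defs.isometry B X -> eps ^+ 2 = 1 ->
  (- eps) ^+ n * \det X != 1 -> exists2 v : 'rV[R]_n, v != 0 & v *m X = eps *: v.
Proof.
move=> isoX eps2 detX; have := det_isometry_shift isoX eps2.
move/eqP; rewrite -{1}[\det (X - _)]mul1r -subr_eq0 -mulrBl mulf_eq0 subr_eq0.
rewrite eq_sym (negPf detX) /= => /det0P [v v0 vX].
by exists v => //; apply/eigenspaceP/sub_kermxP.
Qed.

End Nondegenerate.
End BilinearForm.

Lemma sqrN1 (R : pzRingType) : (-1 : R) ^+ 2 = 1.
Proof. by rewrite sqrrN expr1n. Qed.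

Section Semisimplicity.
Variables (R : fieldType) (n : nat).
Implicit Types (v : 'rV[R]_n) (X rho : 'M[R]_n).

Definition semisimple_at X (eps : R) : Prop :=
  forall v, v *m (X - eps%:M) *m (X - eps%:M) = 0 -> v *m (X - eps%:M) = 0.

Lemma diagonalizable_semisimple_at X eps : diagonalizable X -> semisimple_at X eps.
Proof.
case=> P unitP /(similar_diagLR unitP) [D]; rewrite conjVmx // => ->.
have shiftD : invmx P *m diag_mx D *m P - eps%:M
              = invmx P *m diag_mx (D - const_mx eps) *m P.
  rewrite linearB /= diag_const_mx mulmxBr mulmxBl mul_mx_scalar -scalemxAl.
  by rewrite mulVmx // scalemx1.
move=> v; rewrite shiftD; set d := D - const_mx eps; set w := v *m invmx P.
have conjP Y : v *m (invmx P *m Y *m P) = w *m Y *m P by rewrite /w !mulmxA.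
rewrite !conjP; have -> : w *m diag_mx d *m P *m (invmx P *m diag_mx d *m P)
                         = w *m diag_mx d *m diag_mx d *m P.
  by rewrite !mulmxA (mulmxK unitP).
move=> wdd; have {}wdd : w *m diag_mx d *m diag_mx d = 0.
  by rewrite -[LHS](mulmxK unitP) wdd mul0mx.
suff -> : w *m diag_mx d = 0 by rewrite mul0mx.
apply/rowP => j; move/rowP/(_ j): wdd; rewrite !mul_mx_diag !mxE.
by move/eqP; rewrite mulf_eq0 => /orP [] /eqP ->; rewrite ?mulr0.
Qed.

(* This is how twisting X by reflections in E is analysed. *)
Lemma eigen_of_twist X rho eps v :
  eps ^+ 2 = 1 -> semisimple_at X eps ->
  (forall u : 'rV[R]_n, (u *m rho - u <= eigenspace X eps)%MS) ->
  v *m rho *m X = eps *: v -> v *m rho = v /\ (v <= eigenspace X eps)%MS.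
Proof.
move=> eps2 ssX rhoE vrhoX; set e := v *m rho - v.
have /eigenspaceP eX : (e <= eigenspace X eps)%MS by apply: rhoE.
have vD : v *m (X - eps%:M) = - (eps *: e).
  move: vrhoX; rewrite -[v *m rho](subrK v) -/e mulmxDl eX mulmxBr mul_mx_scalar.
  by move=> <-; rewrite opprD addrCA subrr addr0.
have eps0 : eps != 0 by apply: contra_eq_neq eps2 => ->; rewrite expr0n eq_sym oner_neq0.
have vD0 : v *m (X - eps%:M) = 0.
  by apply: ssX; rewrite vD mulNmx -scalemxAl mulmxBr mul_mx_scalar eX subrr scaler0 oppr0.
move: vD; rewrite vD0 => /eqP; rewrite eq_sym oppr_eq0 scaler_eq0 (negPf eps0) /=.
rewrite subr_eq0 => /eqP ->; split=> //; exact/sub_kermxP.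
Qed.

End Semisimplicity.

Lemma det1_rank1 (R : comNzRingType) n (c : 'cV[R]_n) (r : 'rV[R]_n) :
  \det (1%:M + c *m r) = 1 + (r *m c) 0 0.
Proof.
pose M := block_mx (1%:M : 'M[R]_1) (- r) c 1%:M.
have lowerM : M = block_mx 1%:M 0 c 1%:M *m block_mx 1%:M (- r) 0 (1%:M + c *m r).
  rewrite mulmx_block /M !mulmx0 !mul0mx !mulmx1 !mul1mx ?addr0 ?add0r.
  by rewrite mulmxN (addrC (- _)) addrK.
have upperM : M = block_mx (1%:M + r *m c) (- r) 0 1%:M *m block_mx 1%:M 0 c 1%:M.
  rewrite mulmx_block /M !mulmx0 !mul0mx !mulmx1 !mul1mx ?addr0 ?add0r.
  by rewrite mulNmx addrK.
have := congr1 determinant upperM; rewrite {1}lowerM !det_mulmx.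
rewrite !det_lblock !det_ublock !det1 !mul1r !mulr1 => ->.
by rewrite det_mx11 !mxE eqxx.
Qed.

Section OrthogonalGeometry.
Variables (R : fieldType) (n : nat) (B : 'M[R]_n).
Hypotheses (symB : B^T = B) (unitB : B \in unitmx) (two_neq0 : (2 : R) != 0).
Implicit Types (u v w x z e : 'rV[R]_n) (X : 'M[R]_n).

Lemma bil_sym u v : bil B u v = bil B v u.
Proof.
rewrite /bil; transitivity ((u *m B *m v^T)^T 0 0); first by rewrite [RHS]mxE.
by rewrite !trmx_mul trmxK symB mulmxA.
Qed.

Lemma nondeg_whole : nondeg_on B (1%:M : 'M[R]_n).
Proof.
move=> z _ zperp; suff zB0 : z *m B = 0 by rewrite -[z](mulmxK unitB) zB0 mul0mx.
apply/rowP => j; have := zperp (delta_mx 0 j) (submx1 _).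
by rewrite /bil trmx_delta -colE !mxE.
Qed.

Lemma eigen_perp_image X eps a y : Defs.isometry B X -> eps ^+ 2 = 1 ->
  (a <= eigenspace X eps)%MS -> bil B a (y *m (X - eps%:M)) = 0.
Proof.
move=> isoX eps2 /eigenspaceP aX.
have a_eps : a = eps *: (a *m X) by rewrite aX scalerA -expr2 eps2 scale1r.
rewrite mulmxBr mul_mx_scalar bilBr bilZr {1}a_eps bilZl bil_isometry //.
exact: subrr.
Qed.

(* Semisimplicity makes the eps-eigenspace of an isometry nondegenerate:
   it is complemented by the image of X - eps, which is orthogonal to it. *)
Lemma eigenspace_nondeg X eps : Defs.isometry B X -> eps ^+ 2 = 1 ->
  semisimple_at X eps -> nondeg_on B (eigenspace X eps).
Proof.
move=> isoX eps2 ssX a aE aperp; set D := X - eps%:M.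
have cap0 : (eigenspace X eps :&: D)%MS = 0.
  apply/eqP; rewrite -submx0; apply/row_subP => i; rewrite submx0.
  have /submxP [y yD] := submx_trans (row_sub i _) (capmxSr (eigenspace X eps) D).
  have /sub_kermxP := submx_trans (row_sub i _) (capmxSl (eigenspace X eps) D).
  by rewrite yD => /ssX /eqP.
have full : (1%:M <= eigenspace X eps + D)%MS.
  rewrite sub1mx /row_full mxrank_disjoint_sum // /eigenspace mxrank_ker subnK //.
  exact: rank_leq_row.
apply: nondeg_whole; first exact: submx1.
move=> s /submx_trans/(_ full) /sub_addsmxP [[s1 s2] /= ->].
by rewrite bilDr aperp ?submxMl // eigen_perp_image // add0r.
Qed.

(* A nondegenerate nonzero subspace contains an anisotropic vector: given an
   isotropic z != 0, some row s of S has b(z, s) != 0, and if s is isotropic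
   too then b(z + s, z + s) = 2 b(z, s) != 0. *)
Lemma anisotropic_vector m (S : 'M[R]_(m, n)) :
  nondeg_on B S -> S != 0 -> exists2 a, (a <= S)%MS & bil B a a != 0.
Proof.
move=> ndS /rowV0Pn [z zS z0].
have [qz | qz] := eqVneq (bil B z z) 0; last by exists z.
have : z *m B *m S^T != 0.
  apply: contra z0 => /eqP zS0; apply/eqP; apply: ndS => // s /submxP [d ->].
  by rewrite /bil trmx_mul mulmxA zS0 mul0mx mxE.
case/matrix0Pn => i0 [i bzs]; rewrite (ord1 i0) in bzs.
have {}bzs : bil B z (row i S) != 0 by rewrite /bil tr_row colE mulmxA -colE mxE.
have sS : (row i S <= S)%MS := row_sub i S.
move: (row i S) bzs sS => s bzs sS.
have [qs | qs] := eqVneq (bil B s s) 0; last by exists s.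
exists (z + s); first by rewrite addmx_sub.
rewrite !(bilDl, bilDr) qz qs add0r addr0 (bil_sym s) -mulr2n -mulr_natl.
by rewrite mulf_neq0.
Qed.

Lemma perp_span2 a b z s : bil B z a = 0 -> bil B z b = 0 ->
  (s <= a + b)%MS -> bil B z s = 0.
Proof.
move=> za zb /sub_addsmxP [[u1 u2] /= ->].
by rewrite (mx11_scalar u1) (mx11_scalar u2) !mul_scalar_mx bilDr !bilZr za zb !mulr0 addr0.
Qed.

Lemma orthogonal_basis2 m (S : 'M[R]_(m, n)) : nondeg_on B S -> \rank S = 2 ->
  exists a, exists b,
    [/\ (a <= S)%MS, (b <= S)%MS, bil B a a != 0, bil B b b != 0
      & bil B a b = 0 /\ (S <= a + b)%MS].
Proof.
move=> ndS rS; have [a aS qa] : exists2 a, (a <= S)%MS & bil B a a != 0.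
  by apply: anisotropic_vector; rewrite // -mxrank_eq0 rS.
have /rowV0Pn [b bT b0] : (S :&: perp B a)%MS != 0.
  by rewrite -mxrank_eq0; have := rank_cap_perp B S a; rewrite rS; lia.
have bS := submx_trans bT (capmxSl _ _).
have /perpP ba := submx_trans bT (capmxSr _ _).
have ab : bil B a b = 0 by rewrite bil_sym.
have bna : ~~ (b <= a)%MS.
  apply/negP => /sub_rVP [k bk]; move/negP: b0; apply.
  move: ba; rewrite bk bilZl => /eqP; rewrite mulf_eq0 (negPf qa) orbF => /eqP ->.
  by rewrite scale0r.
have a0 : a != 0 by apply: contraNneq qa => ->; rewrite bil0l.
have Sab : (S <= a + b)%MS.
  have abS : (a + b <= S)%MS by rewrite addsmx_sub aS bS.
  rewrite -(geq_leqif (mxrank_leqif_sup abS)) rS.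
  have := ltn_leqif (mxrank_leqif_sup (addsmxSl a b)); rewrite rank_rV a0 => ->.
  by apply: contra bna; apply: submx_trans (addsmxSr a b).
exists a, b; split => //; apply: contra b0 => /eqP qb; apply/eqP.
by apply: ndS => // s /submx_trans/(_ Sab); apply: perp_span2; rewrite // bil_sym.
Qed.

Lemma oppr1_neq1 : (-1 : R) != 1.
Proof. by rewrite -subr_eq0 -opprD oppr_eq0 -mulr2n. Qed.

Definition refl w : 'M[R]_n := 1%:M - (2 / bil B w w) *: (B *m w^T *m w).

Lemma refl_act v w : v *m refl w = v - (2 / bil B w w * bil B v w) *: w.
Proof. by rewrite /refl mulmxBr mulmx1 -scalemxAr rank1_act scalerA. Qed.

Lemma refl_shift v w : (v *m refl w - v <= w)%MS.
Proof. by rewrite refl_act addrAC subrr add0r -scaleNr; apply: scalemx_sub. Qed.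

Lemma refl_isometry w : bil B w w != 0 -> Defs.isometry B (refl w).
Proof.
move=> qw; apply: isometry_bil => u v; rewrite !refl_act.
by rewrite !(bilBl, bilBr, bilZl, bilZr) (bil_sym w v); field.
Qed.

Lemma refl_det w : bil B w w != 0 -> \det (refl w) = -1.
Proof.
move=> qw; have -> : refl w = 1%:M + (- (2 / bil B w w) *: (B *m w^T)) *m w.
  by rewrite /refl -scalemxAl scaleNr.
by rewrite det1_rank1 -scalemxAr mxE mulmxA -/(bil B w w); field.
Qed.

Lemma refl_coef0 (q c : R) : q != 0 -> 2 / q * c * q = 0 -> c = 0.
Proof.
move=> q0 /eqP; rewrite !mulf_eq0 invr_eq0 (negPf two_neq0) (negPf q0) /= orbF.
by move/eqP.
Qed.

Lemma refl_fixed_perp v w : bil B w w != 0 -> v *m refl w = v -> bil B v w = 0.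
Proof.
move=> qw; rewrite refl_act => fix_v.
have cw0 : (2 / bil B w w * bil B v w) *: w = 0.
  by apply: oppr_inj; apply: (@addrI _ v); rewrite oppr0 addr0.
by have := congr1 (bil B ^~ w) cw0; rewrite /= bilZl bil0l; apply: refl_coef0.
Qed.

Lemma refl2_fixed_perp v a b : bil B a a != 0 -> bil B b b != 0 -> bil B a b = 0 ->
  v *m refl a *m refl b = v -> bil B v a = 0 /\ bil B v b = 0.
Proof.
move=> qa qb ab; rewrite !refl_act.
set al := 2 / _ * bil B v a; set be := 2 / _ * _ => fix_v.
have comb0 : al *: a + be *: b = 0.
  by apply: oppr_inj; apply: (@addrI _ v); rewrite oppr0 addr0 opprD addrA.
have ba : bil B b a = 0 by rewrite bil_sym.
have := congr1 (bil B ^~ a) comb0; have := congr1 (bil B ^~ b) comb0.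
rewrite /= !bilDl !bilZl ab ba !bil0l !mulr0 add0r addr0.
move=> /(refl_coef0 qb) vb /(refl_coef0 qa) va; split=> //.
by move: vb; rewrite bilBl bilZl ab mulr0 subr0.
Qed.

Lemma fixed_space_neq0 X : odd n -> Defs.isometry B X -> \det X = 1 ->
  eigenspace X 1 != 0.
Proof.
move=> oddn isoX detX.
have [|v v0 vX] := eigenvector_of_det unitB isoX (expr1n _ 2).
  by rewrite -signr_odd oddn expr1 detX mulr1 oppr1_neq1.
by apply/rowV0Pn; exists v => //; apply/eigenspaceP.
Qed.

Lemma refl2_shift a b m (E : 'M[R]_(m, n)) u : (a <= E)%MS -> (b <= E)%MS ->
  (u *m (refl a *m refl b) - u <= E)%MS.
Proof.
move=> aE bE; rewrite mulmxA.
have -> : u *m refl a *m refl b - u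
          = (u *m refl a *m refl b - u *m refl a) + (u *m refl a - u).
  by rewrite addrA subrK.
rewrite addmx_sub //.
  exact: submx_trans (refl_shift _ b) bE.
exact: submx_trans (refl_shift u a) aE.
Qed.

(* For X in SO(B) semisimple at 1 with n odd, the fixed space is not a plane:
   otherwise twisting X by the reflections in an orthogonal basis of it gives
   an element of SO(B) without fixed vector, which is impossible. *)
Lemma fixed_space_rank_neq2 X : odd n -> Defs.isometry B X -> \det X = 1 ->
  semisimple_at X 1 -> \rank (eigenspace X 1) != 2%N.
Proof.
move=> oddn isoX detX ssX; apply/negP => /eqP rE.
have ndE := eigenspace_nondeg isoX (expr1n _ 2) ssX.
have [a [b [aE bE qa qb [ab Eab]]]] := orthogonal_basis2 ndE rE.
have isoH := isometryM (isometryM (refl_isometry qa) (refl_isometry qb)) isoX.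
have [|v v0 vH] := eigenvector_of_det unitB isoH (expr1n _ 2).
  rewrite -signr_odd oddn expr1 !det_mulmx !refl_det // detX mulr1 mulrNN mulr1.
  by rewrite mulN1r oppr1_neq1.
rewrite mulmxA in vH.
have [fix_v vE] := eigen_of_twist (expr1n _ 2) ssX (fun u => refl2_shift u aE bE) vH.
have [va vb] : bil B v a = 0 /\ bil B v b = 0.
  by apply: refl2_fixed_perp; rewrite // -mulmxA.
move/negP: v0; apply; apply/eqP; apply: ndE => // s sE.
exact: perp_span2 va vb (submx_trans sE Eab).
Qed.

(* For X in SO(B) semisimple at -1, the (-1)-eigenspace is not a line:
   twisting X by the reflection in it gives a determinant -1 isometry
   without (-1)-eigenvector. *)
Lemma neg_eigenspace_rank_neq1 X : Defs.isometry B X -> \det X = 1 ->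
  semisimple_at X (-1) -> \rank (eigenspace X (-1)) != 1%N.
Proof.
move=> isoX detX ssX; apply/negP => /eqP rE.
have ndE := eigenspace_nondeg isoX (sqrN1 R) ssX.
have [w wE qw] : exists2 w, (w <= eigenspace X (-1))%MS & bil B w w != 0.
  by apply: anisotropic_vector; rewrite // -mxrank_eq0 rE.
have w0 : w != 0 by apply: contraNneq qw => ->; rewrite bil0l.
have isoH := isometryM (refl_isometry qw) isoX.
have [|v v0 vH] := eigenvector_of_det unitB isoH (sqrN1 R).
  by rewrite opprK expr1n mul1r det_mulmx refl_det // detX mulr1 oppr1_neq1.
rewrite mulmxA in vH.
have wshift u : (u *m refl w - u <= eigenspace X (-1))%MS.
  exact: submx_trans (refl_shift u w) wE.
have [/(refl_fixed_perp qw) vw vE] := eigen_of_twist (sqrN1 R) ssX wshift vH.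
have /sub_rVP [k vk] := submx_trans vE (rank1_span wE w0 rE).
move: vw; rewrite vk bilZl => /eqP; rewrite mulf_eq0 (negPf qw) orbF => /eqP k0.
by move: v0; rewrite vk k0 scale0r eqxx.
Qed.

Definition regular_in X : Prop :=
  forall u : 'M[R]_n, Defs.isometry B u -> \det u = 1 -> unipotent u ->
    u *m X = X *m u -> u = 1%:M.

Section Siegel.
Variables e x : 'rV[R]_n.
Hypotheses (e_iso : bil B e e = 0) (ex : bil B e x = 0).
Hypotheses (e0 : e != 0) (x_notin_e : ~~ (x <= e)%MS).

Definition siegel_nil : 'M[R]_n :=
  B *m x^T *m e - B *m e^T *m x - (bil B x x / 2) *: (B *m e^T *m e).
Definition siegel : 'M[R]_n := 1%:M + siegel_nil.

Lemma siegel_nil_act v : v *m siegel_nil =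
  bil B v x *: e - bil B v e *: x - (bil B x x / 2 * bil B v e) *: e.
Proof. by rewrite /siegel_nil !mulmxBr -scalemxAr !rank1_act scalerA. Qed.

Lemma siegel_act v : v *m siegel = v + v *m siegel_nil.
Proof. by rewrite /siegel mulmxDr mulmx1. Qed.

Lemma siegel_nil_e : e *m siegel_nil = 0.
Proof. by rewrite siegel_nil_act e_iso ex !scale0r mulr0 scale0r !subr0. Qed.

Lemma siegel_nil_x : x *m siegel_nil = bil B x x *: e.
Proof.
by rewrite siegel_nil_act bil_sym ex !scale0r mulr0 scale0r !subr0.
Qed.

(* N^3 = 0, since e N = 0 and x N lies on the line <e>. *)
Lemma siegel_nil_cube : siegel_nil *m siegel_nil *m siegel_nil = 0.
Proof.
apply: mulmx_row_ext => v; rewrite !mulmxA mulmx0 (siegel_nil_act v) !mulmxBl.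
rewrite -!scalemxAl siegel_nil_e siegel_nil_x -scalemxAl siegel_nil_e.
by rewrite !mul0mx !scaler0 !subr0.
Qed.

Lemma siegel_unipotent : unipotent siegel.
Proof.
exists 3%N; rewrite /siegel addrC addKr !exprS expr0 mulr1 -!mulmxE mulmxA.
exact: siegel_nil_cube.
Qed.

Lemma siegel_isometry : Defs.isometry B siegel.
Proof.
apply: isometry_bil => u v; rewrite !siegel_act !siegel_nil_act.
have xe : bil B x e = 0 by rewrite bil_sym.
rewrite !(bilDl, bilDr, bilNl, bilNr, bilZl, bilZr) e_iso ex xe.
rewrite [bil B e v]bil_sym [bil B x v]bil_sym.
by field.
Qed.

(* A unipotent isometry has no eigenvalue -1, hence determinant 1. *)
Lemma siegel_det : \det siegel = 1.
Proof.
apply/eqP; apply: contraT => detS_neq1.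
have [|v v0 vS] := eigenvector_of_det unitB siegel_isometry (sqrN1 R).
  by rewrite opprK expr1n mul1r.
have vN : v *m siegel_nil = (- 2) *: v.
  move: vS; rewrite siegel_act scaleN1r => /(canRL (addKr v)) ->.
  by rewrite scaleNr scaler_nat mulr2n opprD.
have : v *m (siegel_nil *m siegel_nil *m siegel_nil) = 0.
  by rewrite siegel_nil_cube mulmx0.
rewrite !mulmxA vN -!scalemxAl vN -scalemxAl vN !scalerA => /eqP.
by rewrite scaler_eq0 (negPf v0) orbF !mulf_eq0 oppr_eq0 (negPf two_neq0).
Qed.

(* Nondegeneracy gives v with b(v, e) != 0, and then v N = 0 would put x on <e>. *)
Lemma siegel_neq1 : siegel != 1%:M.
Proof.
apply/negP => /eqP S1; have N0 : siegel_nil = 0.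
  by apply: (@addrI _ 1%:M); rewrite addr0.
have [v ve] := exists_nonorth unitB e0.
have := siegel_nil_act v; rewrite N0 mulmx0 => /esym/eqP.
rewrite -addrA -opprD subr_eq0 => /eqP vxe.
move/negP: x_notin_e; apply.
have -> : x = (bil B v e)^-1 *: (bil B v x *: e - (bil B x x / 2 * bil B v e) *: e).
  by rewrite vxe addrK scalerA mulVf // scale1r.
by apply: scalemx_sub; rewrite -scalerBl scalemx_sub.
Qed.

Lemma siegel_commute X eps : Defs.isometry B X -> eps ^+ 2 = 1 ->
  e *m X = eps *: e -> x *m X = eps *: x -> siegel *m X = X *m siegel.
Proof.
move=> isoX eps2 eX xX; apply: mulmx_row_ext => v.
rewrite !mulmxA !siegel_act mulmxDl !siegel_nil_act.
have eps_bil w : w *m X = eps *: w -> bil B (v *m X) w = eps * bil B v w.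
  move=> wX; rewrite -[w in LHS]scale1r -eps2 expr2 -scalerA -wX bilZr.
  by rewrite bil_isometry.
rewrite !mulmxBl -!scalemxAl eX xX (eps_bil x xX) (eps_bil e eX) !scalerA.
by rewrite [eps * bil B v x]mulrC [eps * bil B v e]mulrC mulrA [_ * eps]mulrC.
Qed.

End Siegel.

End OrthogonalGeometry.

Section ClosedField.
Variables (K : closedFieldType) (n : nat) (B : 'M[K]_n).
Hypotheses (symB : B^T = B) (unitB : B \in unitmx) (two_neq0 : (2 : K) != 0).
Implicit Types (a b e x : 'rV[K]_n) (X : 'M[K]_n).

Lemma isotropic_in_plane a b : a != 0 -> ~~ (b <= a)%MS ->
  exists e, [/\ (e <= a + b)%MS, e != 0 & bil B e e = 0].
Proof.
move=> a0 bna; have [qb | qb] := eqVneq (bil B b b) 0.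
  exists b; split=> //; first exact: addsmxSr.
  by apply: contraNneq bna => ->; rewrite sub0mx.
pose p0 := - bil B a a / bil B b b; pose p1 := - (2 * bil B a b) / bil B b b.
have [t ht] : exists t, t ^+ 2 = p0 + p1 * t.
  have [t ht] := @solve_monicpoly K 2 (fun i => if i == 0%N then p0 else p1) isT.
  by exists t; rewrite ht !big_ord_recl big_ord0 /= expr0 mulr1 expr1 addr0.
exists (a + t *: b); split.
- by rewrite addmx_sub_adds ?scalemx_sub.
- apply: contraNneq bna => abt.
  have t0 : t != 0 by apply: contraNneq a0 => t0; rewrite -abt t0 scale0r addr0.
  have -> : b = (- t^-1) *: a.
    apply: (scalerI t0); rewrite scalerA mulrN mulfV // scaleN1r.
    by apply/eqP; rewrite -addr_eq0 addrC abt.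
  exact: scalemx_sub.
- rewrite !(bilDl, bilDr, bilZl, bilZr) (bil_sym symB b a).
  have tt : t * (t * bil B b b) = - bil B a a - 2 * t * bil B a b.
    by rewrite mulrA -expr2 ht /p0 /p1; field.
  by rewrite tt; ring.
Qed.

(* Regularity bounds the +-1 eigenspaces: an eigenspace of dimension >= 3
   contains an isotropic e and some x orthogonal to e off the line <e>, whose
   Siegel transformation is a nontrivial unipotent element centralising X. *)
Lemma eigenspace_rank_le2 X eps : Defs.isometry B X -> eps ^+ 2 = 1 ->
  regular_in B X -> (\rank (eigenspace X eps) <= 2)%N.
Proof.
move=> isoX eps2 regX; rewrite leqNgt; apply/negP => rE.
set E := eigenspace X eps in rE.
have /rowV0Pn [a aE a0] : E != 0 by rewrite -mxrank_eq0 -lt0n; lia.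
have [|b bE bna] := exists_vec_outside (S := E) (A := a).
  by have := rank_leq_row a; lia.
have [e [eab e0 qe]] := isotropic_in_plane a0 bna.
have eE : (e <= E)%MS by apply: submx_trans eab _; rewrite addsmx_sub aE bE.
have [|x xT xne] := exists_vec_outside (S := (E :&: perp B e)%MS) (A := e).
  by have := rank_cap_perp B E e; have := rank_leq_row e; lia.
have /eigenspaceP xX := submx_trans xT (capmxSl _ _).
have /perpP xe := submx_trans xT (capmxSr _ _).
have ex : bil B e x = 0 by rewrite bil_sym.
have /eigenspaceP eX := eE.
move/eqP: (siegel_neq1 unitB e0 xne); apply; apply: regX.
- exact (siegel_isometry symB two_neq0 qe ex).
- exact (siegel_det symB unitB two_neq0 qe ex).
- exact (siegel_unipotent symB qe ex).
- exact (siegel_commute isoX eps2 eX xX).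
Qed.

Theorem regular_eigenspaces X : odd n -> Defs.isometry B X -> \det X = 1 ->
  semisimple_at X 1 -> semisimple_at X (-1) -> regular_in B X ->
  \rank (eigenspace X 1) = 1%N /\
  (\rank (eigenspace X (-1)) = 0%N \/ \rank (eigenspace X (-1)) = 2%N).
Proof.
move=> oddn isoX detX ss1 ssN1 regX; split.
  have := eigenspace_rank_le2 isoX (expr1n _ 2) regX.
  have := fixed_space_rank_neq2 symB unitB two_neq0 oddn isoX detX ss1.
  have := fixed_space_neq0 unitB two_neq0 oddn isoX detX; rewrite -mxrank_eq0.
  by case: (\rank _) => [|[|[|]]].
have := eigenspace_rank_le2 isoX (sqrN1 K) regX.
have := neg_eigenspace_rank_neq1 symB unitB two_neq0 isoX detX ssN1.
by case: (\rank _) => [|[|[|]]]; auto.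
Qed.

End ClosedField.

Section FieldExtension.
Variables (F K : fieldType) (f : {rmorphism F -> K}) (n : nat).
Implicit Types (X B : 'M[F]_n).

Lemma map_shift X eps : map_mx f (X - eps%:M) = map_mx f X - (f eps)%:M.
Proof. by rewrite map_mxB map_scalar_mx. Qed.

Lemma rank_eigenspace_map X eps :
  \rank (eigenspace (map_mx f X) (f eps)) = \rank (eigenspace X eps).
Proof. by rewrite /eigenspace !mxrank_ker -map_shift mxrank_map. Qed.

Lemma semisimple_at_map X eps :
  semisimple_at (map_mx f X) (f eps) -> semisimple_at X eps.
Proof.
move=> ssX v vD; apply/eqP; rewrite -(map_mx_eq0 f) map_mxM map_shift; apply/eqP/ssX.
by rewrite -map_shift -!map_mxM vD map_mx0.
Qed.

Lemma isometry_map B X : Defs.isometry B X -> Defs.isometry (map_mx f B) (map_mx f X).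
Proof. by move=> isoX; rewrite /Defs.isometry -[in RHS]isoX !map_mxM map_trmx. Qed.

End FieldExtension.

Section Conclusion.
Variables (R : fieldType) (n : nat) (B : 'M[R]_n).
Hypothesis unitB : B \in unitmx.
Implicit Types (v : 'rV[R]_n) (X : 'M[R]_n).

Lemma stab_line_eigen X v : Defs.isometry B X -> stab_nondeg_line B X v ->
  (v <= eigenspace X 1)%MS \/ (v <= eigenspace X (-1))%MS.
Proof.
move=> isoX [_ [qv /sub_rVP [k vk]]].
have : bil B (v *m X) (v *m X) = 1 * bil B v v by rewrite bil_isometry // mul1r.
rewrite vk bilZl bilZr mulrA => /(mulIf qv) /eqP; rewrite -expr2 sqrf_eq1.
by case/orP => /eqP k1; [left | right]; apply/eigenspaceP; rewrite vk k1.
Qed.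

Lemma eigenlines_from_ranks X : Defs.isometry B X ->
  semisimple_at X 1 -> semisimple_at X (-1) ->
  \rank (eigenspace X 1) = 1%N ->
  \rank (eigenspace X (-1)) = 0%N \/ \rank (eigenspace X (-1)) = 2%N ->
  exists v0 : 'rV[R]_n,
    [/\ v0 != 0, qform B v0 != 0, v0 *m X = v0, \rank (fixed_space X) = 1%N &
        (forall v, stab_nondeg_line B X v -> (v <= v0)%MS)
        \/
        (exists W : 'M[R]_(2, n),
           [/\ \rank W = 2%N, W *m B *m W^T \in unitmx, W *m X = - W &
               forall v, stab_nondeg_line B X v -> (v <= v0)%MS \/ (v <= W)%MS])].
Proof.
move=> isoX ss1 ssN1 r1 rN.
have /rowV0Pn [v0 v0E v00] : eigenspace X 1 != 0 by rewrite -mxrank_eq0 r1.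
have E1v0 := rank1_span v0E v00 r1.
have qv0 : bil B v0 v0 != 0.
  apply: contra v00 => /eqP qv0; apply/eqP.
  apply: (eigenspace_nondeg unitB isoX (expr1n _ 2) ss1) => // s /submx_trans/(_ E1v0).
  by case/sub_rVP => k ->; rewrite bilZr qv0 mulr0.
have /eigenspaceP v0X := v0E; rewrite scale1r in v0X.
exists v0; split=> //; case: rN => rN; [left | right].
  move=> v hv; case: (stab_line_eigen isoX hv) => [vE|].
    exact: submx_trans vE E1v0.
  move/eqP: rN; rewrite mxrank_eq0 => /eqP ->; rewrite submx0 => /eqP v_eq0.
  by case: hv; rewrite v_eq0 eqxx.
pose W := castmx (rN, erefl n) (row_base (eigenspace X (-1))) : 'M[R]_(2, n).
have WE : (W :=: eigenspace X (-1))%MS := eqmx_trans (eqmx_cast _ _) (eq_row_base _).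
have ndN := eigenspace_nondeg unitB isoX (sqrN1 R) ssN1.
exists W; split.
- by rewrite WE rN.
- apply: gram_unit; first by rewrite /row_free WE rN.
  move=> z; rewrite WE => zE zperp; apply: ndN => // s sE.
  by apply: zperp; rewrite WE.
- have /eigenspaceP : (W <= eigenspace X (-1))%MS by rewrite WE.
  by rewrite scaleN1r.
- move=> v hv; case: (stab_line_eigen isoX hv) => vE.
    by left; exact: submx_trans vE E1v0.
  by right; rewrite WE.
Qed.

End Conclusion.

(* In a finite field of odd order, 2 != 0: in characteristic 2 the additive
   order 2 of 1 would divide #|F|. *)
Lemma two_neq0_finField (F : finFieldType) : odd #|F| -> (2 : F) != 0.
Proof.
move=> oddF; apply: contraL oddF => /eqP two0.
have char2 : 2 \in [pchar F] by rewrite inE /= two0 eqxx.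
have := order_dvdG (in_setT (1 : pPrimeCharType char2)).
by rewrite order_pprimeChar ?oner_neq0 // cardsT dvdn2.
Qed.

Lemma SO_group (F : finFieldType) n (B : 'M[F]_n.+1) : group_set (SO_set B).
Proof.
apply/group_setP; split; first by rewrite inE GL_1E mul1mx trmx1 mulmx1 det1 !eqxx.
move=> x y; rewrite !inE => /andP [/eqP isox /eqP detx] /andP [/eqP isoy /eqP dety].
rewrite GL_MxE det_mulmx detx dety mulr1 eqxx andbT.
by have := isometryM isox isoy; rewrite /Defs.isometry => ->.
Qed.

Lemma Omega_in_SO (F : finFieldType) n (B : 'M[F]_n.+1) g :
  g \in Omega_set B -> Defs.isometry B (GLval g) /\ \det (GLval g) = 1.
Proof.
move=> gO; have := subsetP (der1_subG (Group (SO_group B))) g gO.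
by rewrite inE => /andP [/eqP isog /eqP detg].
Qed.

Theorem mainTheorem16 (F : finFieldType) (m : nat) (B : 'M[F]_((m.*2).+1))
  (g : {'GL_((m.*2).+1)[F]}) :
  odd #|F| -> B^T = B -> B \in unitmx ->
  g \in Omega_set B ->
  regular_semisimple B (GLval g) ->
  (exists v0 : 'rV[F]_((m.*2).+1),
      [/\ v0 != 0, qform B v0 != 0, v0 *m GLval g = v0,
          \rank (fixed_space (GLval g)) = 1%N &
          (forall v, stab_nondeg_line B (GLval g) v -> (v <= v0)%MS)
          \/
          (exists W : 'M[F]_(2, (m.*2).+1),
             [/\ \rank W = 2%N, W *m B *m W^T \in unitmx,
                 W *m GLval g = - W &
                 forall v, stab_nondeg_line B (GLval g) v ->
                   (v <= v0)%MS \/ (v <= W)%MS])]).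
Proof.
move=> oddF symB unitB gO [diagG regG].
have two := two_neq0_finField oddF.
have [isoG detG] := Omega_in_SO gO.
pose f := toClosure F.
have ss eps : semisimple_at (GLval g) eps.
  by apply: (@semisimple_at_map _ _ f); apply: diagonalizable_semisimple_at.
have [] := @regular_eigenspaces _ _ (map_mx f B) _ _ _ (map_mx f (GLval g)).
- by rewrite -[in RHS]symB map_trmx.
- by rewrite map_unitmx.
- by rewrite -(rmorph_nat f) fmorph_eq0.
- by rewrite /= odd_double.
- exact: isometry_map.
- by rewrite det_map_mx detG rmorph1.
- by rewrite -(rmorph1 f); apply: diagonalizable_semisimple_at.
- by rewrite -(rmorphN1 f); apply: diagonalizable_semisimple_at.
- exact: regG.
have rank_map eps := rank_eigenspace_map f (GLval g) eps.
rewrite -(rmorphN1 f) -(rmorph1 f) !rank_map => r1 rN.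
exact: eigenlines_from_ranks.
Qed.
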